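(* Let $N\ge 2$ and let $p,p'$ be two paths of length $N$ with edge matrices $E$ and $E'$. Then the shapes of $p$ and $p'$ are equivalent if and only if $E'$ is obtained from $E$ by a circular shift of the columns, i.e. there is an integer $k$ such that for all $n\in\{0,\dots,N-1\}$, column $n$ of $E'$ equals column $(n+k)\bmod N$ of $E$.
   Context: A path of length $N$ is a vector $p=(p_0,\dots,p_{N-1})$ whose entries are the integers $0,\dots,N-1$ in some order; indices are cyclic, $p_N=p_0$, $s_{-1}=s_{N-1}$; $x\bmod N$ denotes the remainder in $\{0,\dots,N-1\}$. Nodes $0,\dots,N-1$ are placed at equally spaced points clockwise around a circle; the shape of $p$ is the set of chords joining node $p_n$ to node $p_{n+1}$, $n=0,\dots,N-1$. Two shapes are equivalent if some rotation of the plane about the center of the circle maps one onto the other. The path differences are $d_n=p_{n+1}-p_n$, and the steps are $s_n=d_n$ if $|d_n|<N/2$; $s_n=N/2$ if $|d_n|=N/2$; $s_n=d_n-N$ if $d_n>N/2$; $s_n=d_n+N$ if $d_n<-N/2$. The edge matrix $E=(e_{in})\in\mathbb{Z}^{2\times N}$ of $p$: for node $n$ let $k$ be the index with $p_k=n$; take $s_k$ and $-s_{k-1}$, replace each by $0$ if its absolute value equals $N/2$, and let $e_{1n}\le e_{2n}$ be these two integers sorted in nondecreasing order. *)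

From mathcomp Require Import all_boot all_order all_algebra.
Set Implicit Arguments. Unset Strict Implicit. Unset Printing Implicit Defensive.
Import Order.TTheory GRing.Theory Num.Theory.
Local Open Scope ring_scope.

Definition is_path (N : nat) (p : seq nat) : bool := perm_eq p (iota 0 N).

Definition pe (N : nat) (p : seq nat) (n : nat) : nat := nth 0%N p (n %% N).

Definition pdiff (N : nat) (p : seq nat) (n : nat) : int :=
  (pe N p n.+1)%:Z - (pe N p n)%:Z.

(* steps s_n ; the test |d| = N/2 is written |d|*2 = N *)
Definition step (N : nat) (p : seq nat) (n : nat) : int :=
  let d := pdiff N p n in
  if `|d| *+ 2 < N%:Z then d
  else if `|d| *+ 2 == N%:Z then (N./2)%:Z
  else if 0 < d then d - N%:Z else d + N%:Z.

Definition zero_half (N : nat) (x : int) : int :=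
  if `|x| *+ 2 == N%:Z then 0 else x.

(* column n of the edge matrix: (e_{1n}, e_{2n}) with e_{1n} <= e_{2n};
   k is the index with p_k = n, and k-1 is taken cyclically as k+N-1. *)
Definition edge_col (N : nat) (p : seq nat) (n : nat) : int * int :=
  let k := index n p in
  let a := zero_half N (step N p k) in
  let b := zero_half N (- step N p (k + N.-1)%N) in
  (Num.min a b, Num.max a b).

Definition node_rot (N : nat) (k : int) (a : nat) : nat :=
  absz ((a%:Z + k) %% N%:Z)%Z.

Definition chord (N : nat) (p : seq nat) (a b : nat) : Prop :=
  exists2 n, (n < N)%N &
    ((a == pe N p n) && (b == pe N p n.+1)) ||
    ((b == pe N p n) && (a == pe N p n.+1)).

Definition shape_equiv (N : nat) (p p' : seq nat) : Prop :=
  exists k : int, forall x y : nat,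
    chord N p' x y <->
    exists a b : nat, [/\ chord N p a b, x = node_rot N k a & y = node_rot N k b].

From mathcomp Require Import all_boot all_order all_algebra zify.
Import Order.TTheory GRing.Theory Num.Theory.
Set Implicit Arguments.
Unset Strict Implicit.
Unset Printing Implicit Defensive.
Local Open Scope ring_scope.

(* Column n of an edge matrix records, as an unordered pair, the circular
   displacements from node n to its two neighbours [next p n] and [prev p n]
   along the cyclic path, a displacement of N/2 being recorded as 0.  These
   values do not change when all nodes are rotated, and a neighbour of n is
   determined by its recorded displacement.  So a circular shift of columns
   says exactly that a rotation carries the neighbours of each node of p onto
   the neighbours of the corresponding node of p'; as the shape of a path is the
   set of chords from each node to its neighbours, this is the equivalence of
   the shapes. *)

Lemma perm_minmax (disp : Order.disp_t) (T : orderType disp) (a b : T) :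
  perm_eq [:: Order.min a b; Order.max a b] [:: a; b].
Proof. by case: leP => _; rewrite ?perm_refl // (perm_catC [:: b] [:: a]). Qed.

Lemma sorted_minmax (disp : Order.disp_t) (T : orderType disp) (a b : T) :
  sorted <=%O [:: Order.min a b; Order.max a b].
Proof. by case: leP => ba; rewrite /= andbT // ltW. Qed.

Lemma minmax_eq (disp : Order.disp_t) (T : orderType disp) (a b c d : T) :
  (Order.min a b, Order.max a b) = (Order.min c d, Order.max c d) <->
  perm_eq [:: a; b] [:: c; d].
Proof.
split=> [[eq_min eq_max] | abcd].
  by rewrite -(permPr (perm_minmax c d)) -eq_min -eq_max perm_sym perm_minmax.
have perm_sorted : perm_eq [:: Order.min a b; Order.max a b]
                           [:: Order.min c d; Order.max c d].
  by rewrite (permPl (perm_minmax a b)) (permPr (perm_minmax c d)).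
have := le_sorted_eq (sorted_minmax a b) (sorted_minmax c d) perm_sorted.
by case=> -> ->.
Qed.

Lemma perm_seq2 (T : eqType) (a b c d : T) :
  [:: a; b] =i [:: c; d] -> (a == b) = (c == d) -> perm_eq [:: a; b] [:: c; d].
Proof.
case: (eqVneq a b) => [<- | ab]; case: (eqVneq c d) => [<- | cd] // eq_ab_cd _.
  by have := eq_ab_cd a; rewrite !mem_seq2 !eqxx /= orbb => /esym/eqP->.
by apply: uniq_perm; rewrite //= inE ?ab ?cd.
Qed.

Lemma perm_map_inj_in (T1 T2 : eqType) (f : T1 -> T2) (s t : seq T1) :
  {in s ++ t &, injective f} -> perm_eq (map f s) (map f t) -> perm_eq s t.
Proof.
move=> injf /permP eq_count; apply/allP => x xst /=.
have count_f u :
    {subset u <= s ++ t} -> count_mem x u = count_mem (f x) (map f u).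
  move=> sub_u; rewrite count_map; apply: eq_in_count => y /sub_u yst /=.
  by rewrite (inj_in_eq injf).
have sub_s : {subset s <= s ++ t} by move=> y; rewrite mem_cat => ->.
have sub_t : {subset t <= s ++ t} by move=> y; rewrite mem_cat orbC => ->.
by rewrite (count_f s sub_s) (count_f t sub_t) eq_count.
Qed.

Definition neighbours (T : eqType) (s : seq T) (x : T) : seq T :=
  [:: next s x; prev s x].

Section UniqCycle.

Variables (T : eqType) (s : seq T).
Hypothesis s_uniq : uniq s.

Lemma next_nth_mod x0 i :
  (i < size s)%N -> next s (nth x0 s i) = nth x0 s (i.+1 %% size s).
Proof.
move=> lt_i_s; rewrite next_nth mem_nth // index_uniq //.
case: s lt_i_s => [|y q] //= lt_i_q.
have [lt_iq | ge_iq] := ltnP i (size q).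
  by rewrite modn_small // (set_nth_default x0).
have -> : i = size q by lia.
by rewrite modnn nth_default.
Qed.

Lemma iter_next_nth x0 i j :
  (i < size s)%N -> iter j (next s) (nth x0 s i) = nth x0 s ((i + j) %% size s).
Proof.
move=> lt_i_s; have s_gt0 : (0 < size s)%N by apply: leq_ltn_trans lt_i_s.
elim: j => [|j IHj]; first by rewrite addn0 modn_small.
by rewrite iterS IHj next_nth_mod ?ltn_pmod // -addn1 modnDml addn1 addnS.
Qed.

Lemma iter_next_eq x j : x \in s -> (iter j (next s) x == x) = (size s %| j)%N.
Proof.
move=> s_x; have lt_xs : (index x s < size s)%N by rewrite index_mem.
have s_gt0 : (0 < size s)%N by apply: leq_ltn_trans lt_xs.
rewrite -{1 2}(nth_index x s_x) iter_next_nth // nth_uniq ?ltn_pmod //.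
by rewrite -{2}(modn_small lt_xs) -{2}[index x s]addn0 eqn_modDl mod0n.
Qed.

Lemma next_eq_prev x : x \in s -> (next s x == prev s x) = (size s %| 2)%N.
Proof.
move=> s_x; rewrite -(can_eq (prev_next s_uniq)) next_prev //.
exact: iter_next_eq 2 s_x.
Qed.

Lemma neighbours_neq x y :
  (1 < size s)%N -> x \in s -> y \in neighbours s x -> (y \in s) && (y != x).
Proof.
move=> s_gt1 s_x; have next_neq : next s x != x.
  by rewrite (iter_next_eq 1 s_x) dvdn1 neq_ltn s_gt1 orbT.
rewrite mem_seq2 => /orP[] /eqP ->; first by rewrite mem_next s_x.
by rewrite mem_prev s_x -(can_eq (prev_next s_uniq)) next_prev // eq_sym.
Qed.

End UniqCycle.

(* [step N p n] unfolds to [circ_step N (pdiff N p n)]. *)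
Definition circ_step (N : nat) (d : int) : int :=
  if `|d| *+ 2 < N%:Z then d
  else if `|d| *+ 2 == N%:Z then (N./2)%:Z
  else if 0 < d then d - N%:Z else d + N%:Z.

Lemma modz_small_abs (d n : int) :
  `|d| < n -> (d %% n)%Z = if d < 0 then d + n else d.
Proof.
move=> lt_dn; case: ltP => [d_lt0 | d_ge0]; last by rewrite modz_small; lia.
by rewrite -(modzDr d n) modz_small; lia.
Qed.

Section CircStep.
Variable N : nat.

Lemma zero_half_circ_stepN d :
  zero_half N (- circ_step N d) = zero_half N (circ_step N (- d)).
Proof. by rewrite /zero_half /circ_step normrN; repeat case: ifP; lia. Qed.

(* The hypotheses [d != 0], [e != 0] are needed: 0 and N/2 are both recorded
   as 0. *)
Lemma zero_half_circ_step_eq d e :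
  `|d| < N%:Z -> `|e| < N%:Z -> d != 0 -> e != 0 ->
  (zero_half N (circ_step N d) == zero_half N (circ_step N e)) =
  (d == e %[mod N%:Z])%Z.
Proof.
move=> lt_dN lt_eN d_neq0 e_neq0.
rewrite !modz_small_abs // /zero_half /circ_step; repeat case: ifP; lia.
Qed.
End CircStep.

Section NodeRotation.
Variable N : nat.
Hypothesis N_gt0 : (0 < N)%N.

Lemma node_rotE k a : (node_rot N k a)%:Z = ((a%:Z + k) %% N%:Z)%Z.
Proof. by rewrite /node_rot gez0_abs // modz_ge0 //; lia. Qed.

Lemma node_rot_lt k a : (node_rot N k a < N)%N.
Proof. by rewrite -ltz_nat node_rotE ltz_pmod //; lia. Qed.

Lemma node_rotK k a : (a < N)%N -> node_rot N (- k) (node_rot N k a) = a.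
Proof.
move=> lt_aN; apply/eqP; rewrite -eqz_nat !node_rotE modzDml addrK.
by rewrite modz_small //; lia.
Qed.

Lemma node_rotNK k a : (a < N)%N -> node_rot N k (node_rot N (- k) a) = a.
Proof. by move=> lt_aN; rewrite -{1}(opprK k) node_rotK. Qed.

Lemma node_rot_eq k a b :
  (a < N)%N -> (b < N)%N -> (node_rot N k a == node_rot N k b) = (a == b).
Proof.
move=> lt_aN lt_bN; apply/eqP/eqP => [eq_ab | -> //].
by rewrite -(node_rotK k lt_aN) eq_ab node_rotK.
Qed.

Lemma node_rotB k a b :
  ((node_rot N k b)%:Z - (node_rot N k a)%:Z == b%:Z - a%:Z %[mod N%:Z])%Z.
Proof.
rewrite !node_rotE modzDml -modzDmr modzNm modzDmr.
by apply/eqP; congr (_ %% _)%Z; lia.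
Qed.

End NodeRotation.

Definition edge_entry (N a b : nat) : int :=
  zero_half N (circ_step N (b%:Z - a%:Z)).

Section EdgeEntry.
Variable N : nat.
Hypothesis N_gt0 : (0 < N)%N.

Lemma edge_entry_eq a b c :
  (a < N)%N -> (b < N)%N -> (c < N)%N -> b != a -> c != a ->
  (edge_entry N a b == edge_entry N a c) = (b == c).
Proof.
move=> lt_aN lt_bN lt_cN b_neq_a c_neq_a.
rewrite zero_half_circ_step_eq ?eqz_modDr; try lia.
by rewrite !modz_small; lia.
Qed.

Lemma edge_entry_rot k a b :
  (a < N)%N -> (b < N)%N -> b != a ->
  edge_entry N (node_rot N k a) (node_rot N k b) = edge_entry N a b.
Proof.
move=> lt_aN lt_bN b_neq_a.
have := node_rot_lt N_gt0 k a; have := node_rot_lt N_gt0 k b.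
have := node_rot_eq N_gt0 k lt_bN lt_aN.
rewrite (negbTE b_neq_a) => rb_neq_ra lt_rbN lt_raN.
by apply/eqP; rewrite zero_half_circ_step_eq ?node_rotB //; lia.
Qed.

End EdgeEntry.

Section PathNeighbours.
Variables (N : nat) (p : seq nat).
Hypotheses (N_gt1 : (1 < N)%N) (p_path : is_path N p).

Let N_gt0 : (0 < N)%N := ltnW N_gt1.

Lemma size_path : size p = N.
Proof. by rewrite (perm_size p_path) size_iota. Qed.

Lemma path_uniq : uniq p.
Proof. by rewrite (perm_uniq p_path) iota_uniq. Qed.

Lemma mem_path x : (x \in p) = (x < N)%N.
Proof. by rewrite (perm_mem p_path) mem_iota. Qed.

Lemma pe_lt n : (pe N p n < N)%N.
Proof. by rewrite -mem_path mem_nth // size_path ltn_pmod. Qed.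

Lemma pe_index x : (x < N)%N -> pe N p (index x p) = x.
Proof.
move=> lt_xN; rewrite /pe modn_small ?nth_index ?mem_path //.
by rewrite -size_path index_mem mem_path.
Qed.

Lemma next_pe n : next p (pe N p n) = pe N p n.+1.
Proof.
rewrite /pe next_nth_mod ?path_uniq ?size_path ?ltn_pmod //.
by rewrite -addn1 modnDml addn1.
Qed.

Lemma chordE a b : chord N p a b <-> (a < N)%N && (b \in neighbours p a).
Proof.
rewrite mem_seq2; split.
  case=> n _ /orP[] /andP[/eqP-> /eqP->]; rewrite pe_lt -next_pe ?eqxx //.
  by rewrite prev_next ?path_uniq ?eqxx ?orbT.
case/andP=> lt_aN /orP[] /eqP->.
  exists (index a p); first by rewrite -size_path index_mem mem_path.
  by rewrite -next_pe pe_index ?eqxx.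
have lt_pN : (prev p a < N)%N by rewrite -mem_path mem_prev mem_path.
exists (index (prev p a) p); first by rewrite -size_path index_mem mem_path.
by rewrite -next_pe pe_index // next_prev ?path_uniq ?eqxx ?orbT.
Qed.

Lemma neighbours_neq_path x y :
  (x < N)%N -> y \in neighbours p x -> (y < N)%N && (y != x).
Proof.
move=> lt_xN y_nbr; rewrite -mem_path.
by apply: neighbours_neq; rewrite ?path_uniq ?size_path ?mem_path.
Qed.

Lemma next_eq_prev_path x : (x < N)%N -> (next p x == prev p x) = (N %| 2)%N.
Proof.
by move=> lt_xN; rewrite next_eq_prev ?path_uniq ?mem_path ?size_path.
Qed.

Lemma edge_colE x : (x < N)%N ->
  edge_col N p x =
  (Num.min (edge_entry N x (next p x)) (edge_entry N x (prev p x)),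
   Num.max (edge_entry N x (next p x)) (edge_entry N x (prev p x))).
Proof.
move=> lt_xN; have pe_x := pe_index lt_xN.
have pe_wrap : pe N p (index x p + N.-1).+1 = x.
  by rewrite /pe -addnS prednK // modnDr; exact: pe_x.
have pe_prev : pe N p (index x p + N.-1) = prev p x.
  by rewrite -[in RHS]pe_wrap -next_pe prev_next // path_uniq.
rewrite /edge_col /step -/(circ_step N _) -/(circ_step N _).
rewrite zero_half_circ_stepN.
by rewrite /pdiff pe_wrap pe_prev -next_pe pe_x opprB.
Qed.

End PathNeighbours.

Definition rotates_neighbours (N : nat) (p p' : seq nat) (k : int) : Prop :=
  forall n, (n < N)%N ->
    perm_eq (neighbours p' n)
            (map (node_rot N k) (neighbours p (node_rot N (- k) n))).

Section TwoPaths.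
Variables (N : nat) (p p' : seq nat).
Hypotheses (N_gt1 : (1 < N)%N) (p_path : is_path N p) (p'_path : is_path N p').

Let N_gt0 : (0 < N)%N := ltnW N_gt1.

Lemma shape_equiv_rotates :
  shape_equiv N p p' <-> exists k, rotates_neighbours N p p' k.
Proof.
split=> -[k rot_k]; exists k.
  move=> n lt_nN; set m := node_rot N (- k) n.
  have lt_mN : (m < N)%N := node_rot_lt N_gt0 (- k) n.
  have rot_m : node_rot N k m = n := node_rotNK N_gt0 k lt_nN.
  have mem_nbrs : neighbours p' n =i map (node_rot N k) (neighbours p m).
    move=> y; have chord_n : chord N p' n y <-> y \in neighbours p' n.
      by rewrite (chordE N_gt1 p'_path) lt_nN.
    apply/idP/idP => [/chord_n/rot_k [a [b [ab_chord n_eq ->]]] | ].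
      case/(chordE N_gt1 p_path)/andP: ab_chord => lt_aN b_nbr.
      by rewrite /m n_eq node_rotK // map_f.
    case/mapP=> b b_nbr y_eq; apply/chord_n/rot_k; exists m, b; split=> //.
    by apply/(chordE N_gt1 p_path); rewrite lt_mN.
  (* For N = 2 both neighbours coincide, so multiplicities must be compared. *)
  apply: perm_seq2 mem_nbrs _.
  have [lt_next lt_prev] : (next p m < N)%N /\ (prev p m < N)%N.
    by rewrite -!(mem_path p_path) mem_next mem_prev (mem_path p_path).
  rewrite node_rot_eq // (next_eq_prev_path p_path lt_mN).
  by rewrite (next_eq_prev_path p'_path lt_nN).
move=> x y; rewrite (chordE N_gt1 p'_path); split.
  case/andP=> lt_xN; rewrite (perm_mem (rot_k x lt_xN)) => /mapP[b b_nbr ->].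
  exists (node_rot N (- k) x), b; split=> //; last by rewrite node_rotNK.
  by apply/(chordE N_gt1 p_path); rewrite node_rot_lt.
case=> a [b [/(chordE N_gt1 p_path)/andP[lt_aN b_nbr] -> ->]].
rewrite node_rot_lt // (perm_mem (rot_k _ (node_rot_lt N_gt0 k a))).
by rewrite node_rotK // map_f.
Qed.

Lemma edge_col_eq x y : (x < N)%N -> (y < N)%N ->
  edge_col N p' x = edge_col N p y <->
  perm_eq (map (edge_entry N x) (neighbours p' x))
          (map (edge_entry N y) (neighbours p y)).
Proof.
move=> lt_xN lt_yN; rewrite (edge_colE N_gt1 p'_path lt_xN).
by rewrite (edge_colE N_gt1 p_path lt_yN); apply: minmax_eq.
Qed.

Lemma edge_col_eq_rot k n : (n < N)%N ->
  edge_col N p' n = edge_col N p (node_rot N k n) <->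
  perm_eq (neighbours p' n)
          (map (node_rot N (- k)) (neighbours p (node_rot N k n))).
Proof.
move=> lt_nN; set m := node_rot N k n.
have lt_mN : (m < N)%N := node_rot_lt N_gt0 k n.
have rot_m : node_rot N (- k) m = n := node_rotK N_gt0 k lt_nN.
have entry_m : map (edge_entry N m) (neighbours p m) =
               map (edge_entry N n) (map (node_rot N (- k)) (neighbours p m)).
  rewrite -map_comp; apply/eq_in_map => b.
  move/(neighbours_neq_path N_gt1 p_path lt_mN).
  by case/andP=> lt_bN b_neq_m /=; rewrite -rot_m edge_entry_rot.
rewrite (edge_col_eq lt_nN lt_mN) entry_m; split; last exact: perm_map.
apply: perm_map_inj_in => u v; rewrite !mem_cat.
have nbr_ok w :
    (w \in neighbours p' n) ||
    (w \in map (node_rot N (- k)) (neighbours p m)) ->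
    (w < N)%N && (w != n).
  case/orP=> [|/mapP[b b_nbr ->]]; first exact: neighbours_neq_path.
  have /andP[lt_bN b_neq_m] := neighbours_neq_path N_gt1 p_path lt_mN b_nbr.
  by rewrite node_rot_lt // -rot_m node_rot_eq.
move=> /nbr_ok/andP[lt_uN u_neq_n] /nbr_ok/andP[lt_vN v_neq_n] /eqP.
by rewrite edge_entry_eq // => /eqP.
Qed.

Lemma edge_col_rotates k :
  (forall n, (n < N)%N -> edge_col N p' n = edge_col N p (node_rot N k n)) <->
  rotates_neighbours N p p' (- k).
Proof.
rewrite /rotates_neighbours opprK.
by split=> eq_k n lt_nN; apply/(edge_col_eq_rot k lt_nN)/eq_k.
Qed.

End TwoPaths.

Theorem mainTheorem5 (N : nat) (p p' : seq nat) :
  (2 <= N)%N -> is_path N p -> is_path N p' ->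
  (shape_equiv N p p' <->
   exists k : int, forall n : nat, (n < N)%N ->
     edge_col N p' n = edge_col N p (node_rot N k n)).
Proof.
move=> N_gt1 p_path p'_path.
apply: iff_trans (shape_equiv_rotates N_gt1 p_path p'_path) _.
split=> -[k rot_k]; exists (- k).
  by apply/(edge_col_rotates N_gt1 p_path p'_path); rewrite opprK.
exact/(edge_col_rotates N_gt1 p_path p'_path).
Qed.
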